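(* Let $M,N\ge3$ be integers with $M$ divisible by $(7^{N+1})!$. For $1\le i\le N$ let $\theta_i=\frac1{7^i}$, let $\mu=\frac1{7^N}$ and $\Theta_k=\sum_{i=k}^N\theta_i$. For $1\le k\le N$ let $I_k$ be the sequence consisting of $N-k+1$ batches of $M$ identical items each, where the batches have item sizes $\theta_N,\theta_{N-1},\dots,\theta_k$ in this order. Then $\mathrm{OPT}(I_k)=\frac{M\,\Theta_k}{1-\mu+\theta_k}$ for every $1\le k\le N$.
   Context: Ordered Open End Bin Packing: a sequence of items with sizes in $(0,1]$ must be packed into bins in sequence order, where an item may be added to a bin only if the bin's current total size is strictly below $1$; equivalently, in each bin the total size of all items except the one appearing last in the sequence is strictly below $1$. $\mathrm{OPT}(I)$ is the minimum number of bins of such a packing of the sequence $I$. *)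

From mathcomp Require Import all_boot all_order all_algebra.
Set Implicit Arguments. Unset Strict Implicit. Unset Printing Implicit Defensive.
Import Order.TTheory GRing.Theory Num.Theory.
Local Open Scope ring_scope.

(* An instance is a sequence of item sizes s = [:: s_0; ...; s_(n-1)].
   A packing assigns to each item index i < size s a bin label f i : nat. *)

Definition load_before (s : seq rat) (f : nat -> nat) (b j : nat) : rat :=
  \sum_(0 <= i < j | f i == b) s`_i.

(* Ordered open end packing: in each bin, the total size of all items except
   the one appearing last in the sequence is strictly below 1. *)
Definition oe_packing (s : seq rat) (f : nat -> nat) : Prop :=
  forall j : nat, (j < size s)%N ->
    (forall i : nat, (j < i)%N -> (i < size s)%N -> f i != f j) ->
    load_before s f (f j) j < 1.

Definition nbins (s : seq rat) (f : nat -> nat) : nat :=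
  size (undup [seq f i | i <- iota 0 (size s)]).

Definition is_OPT (s : seq rat) (m : nat) : Prop :=
  (exists f, oe_packing s f /\ nbins s f = m) /\
  (forall f, oe_packing s f -> (m <= nbins s f)%N).

Definition theta (i : nat) : rat := (7%:R ^+ i)^-1.
Definition Theta (N k : nat) : rat := \sum_(k <= i < N.+1) theta i.

Definition instI (M N k : nat) : seq rat :=
  flatten [seq nseq M (theta i) | i <- rev (iota k (N - k).+1)].

(* Measure sizes in units of 7^-N: the items of I_k then have weights 7^t,
   M items for each level t = 0 .. L with L = N - k.  Put A = 7^L and
   c = 7^k - 1, so that 7^N = A (c + 1).  In an ordered open end packing a bin
   holds less than 7^N units before its last item and at most A in it, hence at
   most Y = 7^N - 1 + A units; since the total weight is M (1 + 7 + ... + 7^L),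
   at least B = M (1 + ... + 7^L) / Y bins are needed, and this is the claimed
   value.  Conversely, when Y c A divides M, B bins suffice without any slack:
   every bin receives six items of each level t < L (A - 1 units), one block of
   c A units cut from a single level, and finally one item of the top level.
   Y, c and A are distinct and at most 7^(N+1), so (7^(N+1))! is a multiple of
   Y c A. *)

From mathcomp Require Import all_boot all_order all_algebra.
From mathcomp Require Import zify ring.
Import GRing.Theory Num.Theory.

Set Implicit Arguments.
Unset Strict Implicit.
Unset Printing Implicit Defensive.

Lemma partition_big_undup {R : Type} {idx : R} {op : Monoid.com_law idx}
    {I J : eqType} (f : I -> J) (F : I -> R) (r : seq I) :
  \big[op/idx]_(i <- r) F i =
  \big[op/idx]_(b <- undup (map f r)) \big[op/idx]_(i <- r | f i == b) F i.
Proof.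
rewrite (exchange_big_dep predT) //= big_seq_cond [RHS]big_seq_cond.
apply: eq_bigr => i /andP[ir _].
have fi_in : f i \in undup (map f r) by rewrite mem_undup map_f.
rewrite (perm_big _ (perm_to_rem fi_in)) big_cons eqxx big1_seq ?Monoid.mulm1 //.
move=> b /andP[/eqP fib]; rewrite (mem_rem_uniq _ (undup_uniq _)) inE -fib.
by rewrite eqxx.
Qed.

Lemma dvdn_prod_fact n (s : seq nat) :
  uniq s -> all (fun x => 0 < x <= n) s -> \prod_(x <- s) x %| n`!.
Proof.
move=> s_uniq /allP s_range; rewrite fact_prod [X in _ %| X](bigID (mem s)) /=.
have perm_s : perm_eq [seq i <- index_iota 1 n.+1 | i \in s] s.
  apply: uniq_perm => //; first by rewrite filter_uniq ?iota_uniq.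
  move=> x; rewrite mem_filter mem_index_iota andb_idr // => /s_range.
  by rewrite ltnS.
by rewrite -(perm_big _ perm_s) big_filter dvdn_mulr.
Qed.

Lemma count_divn_eq d q (s : seq nat) :
  0 < d -> uniq s -> count (fun r => r %/ d == q) s <= d.
Proof.
move=> d_gt0 s_uniq; rewrite -size_filter -[X in _ <= X](size_iota (q * d)).
apply: uniq_leq_size; first exact: filter_uniq.
move=> r; rewrite mem_filter mem_iota => /andP[/eqP <- _].
by rewrite leq_divM -mulSnr ltn_ceil.
Qed.

Lemma count_addn_divn_eq P G K m b : 0 < G -> m <= K * G ->
  count (fun r => P + r %/ G == b) (iota 0 m) <= G * (P <= b < P + K).
Proof.
move=> G_gt0 m_le; have [b_in | b_out] := boolP (P <= b < P + K).
  rewrite muln1 (@eq_count _ _ (fun r => r %/ G == b - P)).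
    exact: count_divn_eq (iota_uniq _ _).
  by case/andP: b_in => P_le _ r /=; rewrite -{1}(subnKC P_le) eqn_add2l.
rewrite muln0 (@eq_in_count _ _ pred0) ?count_pred0 // => r.
rewrite mem_iota => /andP[_ r_lt]; apply/negbTE.
have : r %/ G < K by rewrite ltn_divLR //; apply: leq_trans m_le.
by move: (r %/ G) b_out => q; lia.
Qed.

Lemma sum_step_indicators_le1 (P : nat -> nat) b e :
  (forall t, P t <= P t.+1) -> \sum_(0 <= t < e) (P t <= b < P t.+1) <= 1.
Proof.
move=> P_mono; suff : \sum_(0 <= t < e) (P t <= b < P t.+1) + (P e <= b) <= 1.
  exact: leq_trans (leq_addr _ _).
elim: e => [|e IH]; first by rewrite big_geq // leq_b1.
rewrite big_nat_recr //=; have := P_mono e; move: IH.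
by case: (leqP (P e) b); case: (leqP (P e.+1) b) => /=; lia.
Qed.

Lemma big_nat_offset {R : Type} {idx : R} {op : Monoid.law idx} (F : nat -> R) a m :
  \big[op/idx]_(a <= i < a + m) F i = \big[op/idx]_(0 <= r < m) F (a + r).
Proof.
rewrite -{1}[a]add0n big_addn addKn.
by apply: eq_bigr => r _; rewrite addnC.
Qed.

Lemma big_nat_blocks {R : Type} {idx : R} {op : Monoid.law idx} (F : nat -> R) M e m :
  \big[op/idx]_(0 <= i < e * M + m) F i =
  op (\big[op/idx]_(0 <= t < e) \big[op/idx]_(0 <= r < M) F (t * M + r))
     (\big[op/idx]_(0 <= r < m) F (e * M + r)).
Proof.
have blocks n : \big[op/idx]_(0 <= i < n * M) F i =
                \big[op/idx]_(0 <= t < n) \big[op/idx]_(0 <= r < M) F (t * M + r).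
  elim: n => [|n IH]; first by rewrite !big_geq.
  rewrite big_nat_recr //= -IH mulSnr (big_cat_nat (leq0n (n * M)) (leq_addr _ _)).
  by rewrite big_nat_offset.
by rewrite (big_cat_nat (leq0n (e * M)) (leq_addr _ _)) big_nat_offset blocks.
Qed.

Definition repunit7 t := \sum_(0 <= u < t) 7 ^ u.

Lemma repunit7_spec t : 6 * repunit7 t + 1 = 7 ^ t.
Proof.
elim: t => [|t IH]; first by rewrite /repunit7 big_geq.
by rewrite /repunit7 big_nat_recr //= -/(repunit7 t) expnS; lia.
Qed.

Lemma sum_muln_count (P : pred nat) (a m : nat) :
  \sum_(0 <= r < m) a * P r = a * count P (iota 0 m).
Proof.
rewrite -big_distrr -sum1_count [X in _ = _ * X]big_mkcond /index_iota subn0.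
by congr (_ * _); apply: eq_bigr => r _; case: (P r).
Qed.

Lemma is_OPT_intro (s : seq rat) m f :
  oe_packing s f -> nbins s f <= m ->
  (forall g, oe_packing s g -> m <= nbins s g) -> is_OPT s m.
Proof.
move=> f_oe f_le m_le; split=> //; exists f; split=> //.
by apply/eqP; rewrite eqn_leq f_le m_le.
Qed.

Section UnitSizes.

Variables (s : seq rat) (D : nat) (w : nat -> nat).
Hypothesis D_gt0 : 0 < D.
Hypothesis s_units : forall i, i < size s -> (s`_i = (w i)%:R / D%:R)%R.

Lemma load_before_lt1 f b j : j <= size s ->
  (load_before s f b j < 1)%R = (\sum_(0 <= i < j | f i == b) w i < D).
Proof.
move=> j_le.
have -> : load_before s f b j = ((\sum_(0 <= i < j | f i == b) w i)%:R / D%:R)%R.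
  rewrite /load_before natr_sum mulr_suml [LHS]big_nat_cond [RHS]big_nat_cond.
  by apply: eq_bigr => i /andP[/andP[_ i_lt] _]; apply: s_units (leq_trans i_lt j_le).
by rewrite ltr_pdivrMr ?ltr0n // mul1r ltr_nat.
Qed.

Lemma oe_packing_prefix f bd : bd <= size s ->
  (forall b, \sum_(0 <= i < bd | f i == b) w i < D) ->
  {in [pred i | bd <= i < size s] &, injective f} -> oe_packing s f.
Proof.
move=> bd_le prefix_lt f_inj j j_lt _; rewrite load_before_lt1 ?(ltnW j_lt) //.
have [j_le | bd_lt] := leqP j bd.
  apply: leq_ltn_trans (prefix_lt (f j)).
  by rewrite (big_cat_nat (leq0n j) j_le) leq_addr.
have tail0 : \sum_(bd <= i < j | f i == f j) w i = 0.
  rewrite big_nat_cond big1 // => i /andP[/andP[bd_le_i i_lt] /eqP fij].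
  have := f_inj i j; rewrite !inE bd_le_i (ltnW bd_lt) j_lt (ltn_trans i_lt j_lt).
  by move=> /(_ isT isT fij) i_j; move: i_lt; rewrite i_j ltnn.
by rewrite (big_cat_nat (leq0n bd) (ltnW bd_lt)) /= tail0 addn0 prefix_lt.
Qed.

Lemma oe_bin_units_le f b a : (forall i, i < size s -> w i <= a) ->
  oe_packing s f -> \sum_(0 <= i < size s | f i == b) w i <= D - 1 + a.
Proof.
move=> w_le f_oe; have [in_bin | empty_bin] := boolP (has (fun i => f i == b) (iota 0 (size s))).
  have exP : exists i, (i < size s) && (f i == b).
    by case/hasP: in_bin => i; rewrite mem_iota => /andP[_ i_lt] fi; exists i; rewrite i_lt.
  have ubP i : (i < size s) && (f i == b) -> i <= size s by case/andP => /ltnW.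
  have [j /andP[j_lt /eqP fj] j_max] := ex_maxnP exP ubP.
  have j_last i : j < i -> i < size s -> f i != f j.
    move=> j_lt_i i_lt; apply/negP => /eqP fi.
    by have := j_max i; rewrite i_lt fi fj eqxx leqNgt j_lt_i => /(_ isT).
  have tail0 : \sum_(j.+1 <= i < size s | f i == b) w i = 0.
    rewrite big_nat_cond big1 // => i /andP[/andP[j_lt_i i_lt] /eqP fi].
    by have := j_last i j_lt_i i_lt; rewrite fi fj eqxx.
  have := f_oe j j_lt j_last; rewrite load_before_lt1 ?(ltnW j_lt) // fj => prefix_lt.
  rewrite (big_cat_nat (leq0n j.+1) j_lt) /= tail0 addn0.
  rewrite big_mkcond big_nat_recr //= -big_mkcond fj eqxx.
  by apply: leq_add (w_le j j_lt); rewrite subn1 -ltnS prednK.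
rewrite big_nat_cond big1 // => i /andP[/andP[_ i_lt] fi].
by case/hasP: empty_bin; exists i; rewrite ?mem_iota.
Qed.

Lemma nbins_units_lower f a : (forall i, i < size s -> w i <= a) ->
  oe_packing s f -> \sum_(0 <= i < size s) w i <= nbins s f * (D - 1 + a).
Proof.
move=> w_le f_oe; have bin_le b : \sum_(i <- iota 0 (size s) | f i == b) w i <= D - 1 + a.
  by have := oe_bin_units_le b w_le f_oe; rewrite /index_iota subn0.
rewrite /nbins /index_iota subn0 (partition_big_undup f).
apply: (@leq_trans (\sum_(b <- undup [seq f i | i <- iota 0 (size s)]) (D - 1 + a))).
  by apply: leq_sum => b _; apply: bin_le.
by rewrite big_const_seq count_predT iter_addn_0 mulnC.
Qed.

End UnitSizes.

Lemma size_flatten_nseq (T : Type) M (r : seq T) :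
  size (flatten [seq nseq M x | x <- r]) = size r * M.
Proof. by elim: r => //= x r IH; rewrite size_cat size_nseq IH mulSn. Qed.

Lemma nth_flatten_nseq (T : Type) (x0 : T) M (r : seq T) i : 0 < M ->
  nth x0 (flatten [seq nseq M x | x <- r]) i = nth x0 r (i %/ M).
Proof.
move=> M_gt0; elim: r i => [|x r IH] i /=; first by rewrite !nth_nil.
rewrite nth_cat size_nseq; case: ltnP => [i_lt | M_le].
  by rewrite nth_nseq i_lt divn_small.
by rewrite IH -{2}(subnK M_le) divnDr ?dvdnn // divnn M_gt0 addn1.
Qed.

Lemma size_instI M N k : size (instI M N k) = (N - k).+1 * M.
Proof.
by rewrite /instI (map_comp (nseq M) theta) size_flatten_nseq size_map size_rev size_iota.
Qed.

Lemma theta_units N t : t <= N -> theta (N - t) = ((7 ^ t)%:R / (7 ^ N)%:R)%R.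
Proof.
move=> t_le; rewrite /theta -{2}(subnK t_le) expnD natrM !natrX.
by rewrite invfM mulrCA mulfV ?mulr1 // expf_neq0.
Qed.

Lemma instI_units M N k i : 0 < M -> k <= N -> i < (N - k).+1 * M ->
  ((instI M N k)`_i = (7 ^ (i %/ M))%:R / (7 ^ N)%:R)%R.
Proof.
move=> M_gt0 k_le i_lt; have q_lt : i %/ M < (N - k).+1 by rewrite ltn_divLR.
rewrite /instI (map_comp (nseq M) theta) nth_flatten_nseq //.
rewrite (nth_map 0) ?size_rev ?size_iota // nth_rev ?size_iota //.
move: (i %/ M) q_lt => q q_lt; rewrite nth_iota; last by lia.
by rewrite -theta_units; [congr theta; lia | lia].
Qed.

Lemma Theta_units N k : k <= N ->
  Theta N k = ((repunit7 (N - k).+1)%:R / (7 ^ N)%:R)%R.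
Proof.
move=> k_le; rewrite /Theta /repunit7 natr_sum mulr_suml.
have -> : N.+1 = k + (N - k).+1 by lia.
rewrite big_nat_offset big_nat_rev /=; apply: eq_big_nat => u /andP[_ u_lt].
by rewrite -theta_units; [congr theta; lia | lia].
Qed.

Lemma OPT_denominator_units N k : k <= N ->
  (1 - theta N + theta k = (7 ^ N - 1 + 7 ^ (N - k))%:R / (7 ^ N)%:R)%R.
Proof.
move=> k_le; rewrite -{1}(subn0 N) -{1}(subKn k_le) !theta_units ?leq_subr //.
have pow_neq0 : ((7 ^ N)%:R : rat) != 0%R by rewrite pnatr_eq0 -lt0n expn_gt0.
by rewrite natrD natrB ?expn_gt0 // expn0; field.
Qed.

Lemma sum_pow7_blocks M e : 0 < M ->
  \sum_(0 <= i < e * M) 7 ^ (i %/ M) = M * repunit7 e.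
Proof.
move=> M_gt0; rewrite -[e * M]addn0 big_nat_blocks (big_geq (leqnn 0)) /= addn0.
rewrite /repunit7 big_distrr; apply: eq_big_nat => t _.
under eq_big_nat => r /andP[_ r_lt] do rewrite divnMDl // (divn_small r_lt) addn0.
by rewrite sum_nat_const_nat subn0.
Qed.

Section Construction.

Variables N k M : nat.
Hypothesis k_gt0 : 0 < k.
Hypothesis k_le : k <= N.
Hypothesis M_gt0 : 0 < M.

Let L := N - k.
Let A := 7 ^ L.
Let c := 7 ^ k - 1.
Let Y := 7 ^ N - 1 + A.
Hypothesis modulus_dvd : Y * c * A %| M.
Let p := M %/ (Y * c * A).
Let B := p * c * A * repunit7 L.+1.
Let R := repunit7 L.

Let G t := c * 7 ^ (L - t).
Let K t := if t < L then p * A * (c - 5) * 7 ^ t else p * A * (Y - repunit7 L.+1).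
Let F t := if t < L then 6 else 1.
Let P t := \sum_(0 <= u < t) K u.

(* Level t is cut into K t blocks of G t items, of weight c A each, going to
   the bins P t, ..., P t.+1 - 1; its remaining F t * B items are dealt out F t
   per bin to all B bins: six fillers for t < L, and for t = L the closers. *)
Definition lab t r := if r < K t * G t then P t + r %/ G t else (r - K t * G t) %/ F t.
Definition pack i := lab (i %/ M) (i %% M).

Let c_ge6 : 6 <= c.
Proof.
have : 7 ^ 1 <= 7 ^ k by rewrite leq_exp2l.
by rewrite /c expn1; lia.
Qed.

Let pow7N : 7 ^ N = A * (c + 1).
Proof. by rewrite /A /c subnK ?expn_gt0 // -expnD subnK. Qed.

Let M_eq : M = p * (Y * c * A).
Proof. by rewrite divnK. Qed.

Let repunit_top : repunit7 L.+1 = R + A.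
Proof. by rewrite /R /repunit7 big_nat_recr. Qed.

Let R_eq : 6 * R + 1 = A.
Proof. exact: repunit7_spec. Qed.

Let filler_identity : A * (c - 5) + 6 * (R + A) = Y.
Proof.
have : A * (c - 5) + A * 5 = A * c by rewrite -mulnDr subnK // ltnW.
by rewrite /Y pow7N; lia.
Qed.

Let repunit_le_Y : R + A <= Y.
Proof.
have : A * 6 <= A * c by rewrite leq_mul2l c_ge6 orbT.
by rewrite /Y pow7N; lia.
Qed.

Let top_identity : (c - 5) * R + (Y - (R + A)) = c * (R + A).
Proof.
have : (c - 5) * R + 5 * R = c * R by rewrite -mulnDl subnK // ltnW.
by rewrite /Y pow7N; lia.
Qed.

Let G_gt0 t : 0 < G t.
Proof. by rewrite /G muln_gt0 expn_gt0 /= andbT (leq_trans _ c_ge6). Qed.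

Lemma block_weight t : t <= L -> 7 ^ t * G t = c * A.
Proof. by move=> t_le; rewrite mulnCA -expnD subnKC. Qed.

Lemma level_size t : t <= L -> K t * G t + F t * B = M.
Proof.
rewrite M_eq /K /F /B repunit_top; case: ltnP => [t_lt | t_ge] t_le.
  by rewrite -mulnA block_weight // -filler_identity; ring.
have -> : t = L by apply/eqP; rewrite eqn_leq t_le.
by rewrite /G subnn expn0 muln1 -{2}(subnK repunit_le_Y); ring.
Qed.

Lemma P_succ t : P t.+1 = P t + K t.
Proof. by rewrite /P big_nat_recr. Qed.

Lemma P_monotone : {homo P : m n / m <= n}.
Proof. by move=> m n m_le; rewrite /P (big_cat_nat (leq0n m) m_le) leq_addr. Qed.

Lemma P_top : P L.+1 = B.
Proof.
rewrite P_succ /K ltnn /P (eq_big_nat _ _ (F2 := fun u => p * A * (c - 5) * 7 ^ u)).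
  rewrite -big_distrr /= -/(repunit7 L) -/R /B repunit_top.
  transitivity (p * A * ((c - 5) * R + (Y - (R + A)))); first ring.
  by rewrite top_identity; ring.
by move=> u /andP[_ u_lt]; rewrite /K u_lt.
Qed.

Lemma lab_lt t r : t <= L -> r < M -> lab t r < B.
Proof.
move=> t_le r_lt; rewrite /lab; case: (ltnP r (K t * G t)) => [r_block | r_filler].
  rewrite -P_top; apply: leq_trans _ (P_monotone (t_le : t.+1 <= L.+1)).
  by rewrite P_succ ltn_add2l ltn_divLR.
have F_gt0 : 0 < F t by rewrite /F; case: ifP.
by rewrite ltn_divLR // ltn_subLR // [B * _]mulnC level_size.
Qed.

Let top_blocks_le : K L * G L <= M.
Proof. by rewrite -(level_size (leqnn L)) leq_addr. Qed.

Let closers_start := L * M + K L * G L.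

Lemma pack_closer i : closers_start <= i < L.+1 * M -> pack i = i - closers_start.
Proof.
case/andP=> start_le i_lt.
have LM_le : L * M <= i by apply: leq_trans start_le; rewrite leq_addr.
have rem_lt : i - L * M < M by rewrite ltn_subLR // -mulSnr.
have i_eq : i = L * M + (i - L * M) by rewrite subnKC.
rewrite /pack {1 2}i_eq divnMDl // modnMDl (divn_small rem_lt) (modn_small rem_lt) addn0.
rewrite /lab ltnNge leq_subRL // -/closers_start start_le /=.
by rewrite /F ltnn divn1 /closers_start subnDA.
Qed.

Lemma count_lab_blocks t b :
  count (fun r => lab t r == b) (iota 0 (K t * G t)) <= G t * (P t <= b < P t.+1).
Proof.
rewrite P_succ (@eq_in_count _ _ (fun r => P t + r %/ G t == b)).
  exact: count_addn_divn_eq.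
by move=> r; rewrite mem_iota /lab => /andP[_ ->].
Qed.

Lemma count_lab_level t b : t < L ->
  count (fun r => lab t r == b) (iota 0 M) <= G t * (P t <= b < P t.+1) + 6.
Proof.
move=> t_lt; rewrite -(level_size (ltnW t_lt)) iotaD count_cat leq_add ?count_lab_blocks //.
rewrite /F t_lt add0n -[K t * G t]addn0 iotaDl count_map.
rewrite (@eq_count _ _ (fun r => 0 + r %/ 6 == b)); last first.
  by move=> r /=; rewrite /lab ltnNge leq_addr addKn /F t_lt.
have filler_le : 6 * B <= B * 6 by rewrite mulnC.
apply: leq_trans (count_addn_divn_eq 0 b (isT : 0 < 6) filler_le) _.
by rewrite -[X in _ <= X]muln1 leq_mul2l leq_b1 orbT.
Qed.

Lemma pack_prefix_bin_lt b :
  \sum_(0 <= i < closers_start | pack i == b) 7 ^ (i %/ M) < 7 ^ N.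
Proof.
have level_sum t m : m <= M ->
    \sum_(0 <= r < m) (if pack (t * M + r) == b then 7 ^ ((t * M + r) %/ M) else 0) =
    7 ^ t * count (fun r => lab t r == b) (iota 0 m).
  move=> m_le; rewrite -sum_muln_count; apply: eq_big_nat => r /andP[_ r_lt].
  have r_ltM := leq_trans r_lt m_le.
  rewrite /pack divnMDl // modnMDl (divn_small r_ltM) (modn_small r_ltM) addn0.
  by case: (lab t r == b); rewrite ?muln1 ?muln0.
rewrite big_mkcond big_nat_blocks /= level_sum //.
under eq_big_nat => t _ do rewrite level_sum //.
set ind := fun t => (P t <= b < P t.+1) : nat.
have levels_le : \sum_(0 <= t < L) 7 ^ t * count (fun r => lab t r == b) (iota 0 M) <=
                 c * A * \sum_(0 <= t < L) ind t + 6 * R.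
  rewrite /R /repunit7 !big_distrr -big_split /= big_nat_cond [X in _ <= X]big_nat_cond.
  apply: leq_sum => t /andP[/andP[_ t_lt] _].
  apply: leq_trans (leq_mul (leqnn _) (count_lab_level b t_lt)) _.
  rewrite mulnDr mulnA block_weight ?[7 ^ t * 6]mulnC //; exact: ltnW.
have top_le : 7 ^ L * count (fun r => lab L r == b) (iota 0 (K L * G L)) <= c * A * ind L.
  by rewrite -(block_weight (leqnn L)) -mulnA leq_mul2l count_lab_blocks orbT.
have := sum_step_indicators_le1 b L.+1 (fun t => P_monotone (leqnSn t)).
rewrite big_nat_recr //= -/(ind L) => ind_le.
have ind_sum : c * A * (\sum_(0 <= t < L) ind t + ind L) <= c * A.
  by rewrite -[X in _ <= X]muln1 leq_mul2l; apply/orP; right.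
by move: levels_le top_le ind_sum; rewrite pow7N mulnDr; lia.
Qed.

Let B_Y : B * Y = M * repunit7 L.+1.
Proof. by rewrite /B M_eq; ring. Qed.

Let instI_units_in i : i < size (instI M N k) ->
  ((instI M N k)`_i = (7 ^ (i %/ M))%:R / (7 ^ N)%:R)%R.
Proof. by rewrite size_instI; apply: instI_units. Qed.

Lemma oe_packing_pack : oe_packing (instI M N k) pack.
Proof.
apply: (oe_packing_prefix (expn_gt0 7 N) instI_units_in (bd := closers_start)).
- by rewrite size_instI mulSnr leq_add2l.
- exact: pack_prefix_bin_lt.
move=> i j; rewrite !inE size_instI => i_closer j_closer.
by rewrite !pack_closer //; case/andP: i_closer; case/andP: j_closer; lia.
Qed.

Lemma nbins_pack_le : nbins (instI M N k) pack <= B.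
Proof.
rewrite /nbins size_instI -[B](size_iota 0); apply: uniq_leq_size (undup_uniq _) _.
move=> x; rewrite mem_undup => /mapP[i]; rewrite mem_iota => /andP[_ i_lt] ->.
rewrite mem_iota add0n /pack lab_lt //; first by rewrite -ltnS ltn_divLR.
by rewrite ltn_pmod.
Qed.

Lemma B_le_nbins f : oe_packing (instI M N k) f -> B <= nbins (instI M N k) f.
Proof.
move=> f_oe; have w_le i : i < size (instI M N k) -> 7 ^ (i %/ M) <= A.
  by rewrite size_instI => i_lt; rewrite leq_exp2l // -ltnS ltn_divLR.
have := nbins_units_lower (expn_gt0 7 N) instI_units_in w_le f_oe.
rewrite size_instI sum_pow7_blocks // -B_Y -/Y leq_pmul2r //.
by rewrite /Y addn_gt0 expn_gt0 orbT.
Qed.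

Lemma instI_OPT : exists m, is_OPT (instI M N k) m /\
  (m%:R = M%:R * Theta N k / (1 - theta N + theta k))%R.
Proof.
exists B; split; first exact: is_OPT_intro oe_packing_pack nbins_pack_le B_le_nbins.
rewrite Theta_units // OPT_denominator_units // -/L -/A -/Y.
have pow_neq0 : ((7 ^ N)%:R : rat) != 0%R by rewrite pnatr_eq0 -lt0n expn_gt0.
have Y_neq0 : (Y%:R : rat) != 0%R by rewrite pnatr_eq0 -lt0n /Y addn_gt0 expn_gt0 orbT.
apply: (mulIf Y_neq0); rewrite -natrM B_Y natrM.
by field; apply/andP.
Qed.

End Construction.

Lemma modulus_dvd_fact N k : 0 < k -> k <= N ->
  (7 ^ N - 1 + 7 ^ (N - k)) * (7 ^ k - 1) * 7 ^ (N - k) %| (7 ^ N.+1)`!.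
Proof.
move=> k_gt0 k_le; set Y := _ + _; set c := _ - 1; set A := 7 ^ (N - k).
have -> : Y * c * A = \prod_(x <- [:: Y; c; A]) x by rewrite !big_cons big_nil muln1 mulnA.
have pow7_k : 7 <= 7 ^ k by rewrite -{1}(expn1 7) leq_exp2l.
have pow_k_N : 7 ^ k <= 7 ^ N by rewrite leq_exp2l.
have A_le : A <= 7 ^ N by rewrite leq_exp2l // leq_subr.
have A_gt0 : 0 < A by rewrite expn_gt0.
have c_neq_A : c != A.
  apply/negP=> /eqP /(congr1 odd).
  by rewrite oddB ?expn_gt0 // !oddX /= !orbT.
apply: dvdn_prod_fact.
  rewrite /= !inE !negb_or c_neq_A !andbT.
  by apply/andP; split; apply/negP => /eqP; rewrite /Y /c; lia.
by rewrite /= andbT expnS /Y /c; apply/and3P; split; lia.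
Qed.

Local Open Scope ring_scope.

Theorem mainTheorem9 (M N : nat) :
  (3 <= M)%N -> (3 <= N)%N -> ((7 ^ N.+1)`! %| M)%N ->
  forall k : nat, (1 <= k)%N -> (k <= N)%N ->
  exists m : nat, is_OPT (instI M N k) m /\
    (m%:R : rat) = M%:R * Theta N k / (1 - theta N + theta k).
Proof.
move=> M_ge3 _ fact_dvd k k_gt0 k_le.
apply: instI_OPT => //; first exact: leq_trans M_ge3.
exact: dvdn_trans (modulus_dvd_fact k_gt0 k_le) fact_dvd.
Qed.
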